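(* For every $t\in\mathbb N_T$, every $m\in\mathcal M_n$ and every $\gamma\in\mathcal G$, $$\mathbb E\big[\|\bar f_t(m,\gamma,\mathbf w)-\hat f_t(m,\gamma)\|_\infty\big]\le\mathcal O(1/\sqrt n),$$ where the expectation is over $\mathbf w=(w^1,\dots,w^n)$ with $w^1,\dots,w^n$ i.i.d. with law $\mathbb P(w_t=\cdot)$.
   Context: Let $n,T\in\mathbb N$, $\mathbb N_T=\{1,\dots,T\}$, $\mathcal X,\mathcal U,\mathcal W$ finite sets, $\mathcal I(\mathcal X)=[0,1]^{\mathcal X}$, $\Delta(\mathcal X)$ the probability vectors on $\mathcal X$, $\mathcal M_n=\{m\in\Delta(\mathcal X): m(x)\in\{0,\tfrac1n,\dots,1\}\}$. For each $t$, $f_t:\mathcal X\times\mathcal U\times\mathcal W\times\mathcal I(\mathcal X)\to\mathcal X$, $\mathbb P(w_t=\cdot)$ a probability law on $\mathcal W$, and $\mathbb P(y|x,u,z)=\sum_w\mathbb 1(f_t(x,u,w,z)=y)\mathbb P(w_t=w)$. $\mathcal G$ is the set of maps $\gamma:\mathcal X\to\mathcal U$. Define $\hat f_t(z,\gamma)(y)=\sum_x z(x)\mathbb P(y|x,\gamma(x),z)$ and, for $\mathbf w=(w^1,\dots,w^n)\in\mathcal W^n$, $$\bar f_t(m,\gamma,\mathbf w)(y)=\sum_{x\in\mathcal X}\sum_{w\in\mathcal W}\mathbb 1\big(f_t(x,\gamma(x),w,m)=y\big)\,m(x)\,\frac1n\sum_{i=1}^n\mathbb 1(w^i=w),\quad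 y\in\mathcal X.$$ The data $T,\mathcal X,\mathcal U,\mathcal W,f_t$ and the noise laws do not depend on $n$; $\mathcal O(1/\sqrt n)$ denotes a quantity bounded by $C/\sqrt n$ with $C$ independent of $n$ (and of $m,\gamma$). *)

From HB Require Import structures.
From mathcomp Require Import all_boot all_order all_algebra.
From mathcomp Require Import reals.
Set Implicit Arguments. Unset Strict Implicit. Unset Printing Implicit Defensive.
Import Order.TTheory GRing.Theory Num.Theory.
Local Open Scope ring_scope.

Section Defs.
Variable R : realType.
Variables X U W : finType.

Definition is_prob (S : finType) (p : S -> R) : Prop :=
  (forall s, 0 <= p s) /\ \sum_(s : S) p s = 1.

(* M_n: empirical distributions of n agents *)
Definition in_Mn (n : nat) (m : X -> R) : Prop :=
  is_prob m /\ forall x, exists k : nat, (k <= n)%N /\ m x = k%:R / n%:R.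

(* f : X * U * W * I(X) -> X  (the mean-field argument is a function X -> R) *)
Definition dyn := X -> U -> W -> (X -> R) -> X.

Definition trans (f : dyn) (pw : W -> R) (y x : X) (u : U) (z : X -> R) : R :=
  \sum_(w : W) (f x u w z == y)%:R * pw w.

Definition fhat (f : dyn) (pw : W -> R) (z : X -> R) (g : X -> U) (y : X) : R :=
  \sum_(x : X) z x * trans f pw y x (g x) z.

Definition fbar (n : nat) (f : dyn) (m : X -> R) (g : X -> U)
    (ws : 'I_n -> W) (y : X) : R :=
  \sum_(x : X) \sum_(w : W)
     (f x (g x) w m == y)%:R * m x * (n%:R^-1 * \sum_(i < n) (ws i == w)%:R).

Definition supnorm (h : X -> R) : R := \big[Num.max/0]_(y : X) `|h y|.

Definition iid_expect (n : nat) (pw : W -> R) (F : ('I_n -> W) -> R) : R :=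
  \sum_(ws : {ffun 'I_n -> W}) (\prod_(i < n) pw (ws i)) * F ws.
End Defs.

From HB Require Import structures.
From mathcomp Require Import all_boot all_order all_algebra.
From mathcomp Require Import reals.
From mathcomp Require Import ring lra.
Set Implicit Arguments. Unset Strict Implicit.
Import Order.TTheory GRing.Theory Num.Theory.
Local Open Scope ring_scope.

(* At every y, fbar - fhat is a combination of the deviations e(w) - P(w) of
   the empirical law e of w^1..w^n from the noise law P, with coefficients
   1(f(x,g(x),w,m) = y) m(x); as m is a probability vector, its sup norm is at
   most the sum over w of |e(w) - P(w)|.  Each e(w) - P(w) is the average of n
   independent centred variables bounded by 1, so its second moment is at most
   1/n and, by AM-GM, its first moment at most 1/sqrt n.  Summing over the
   finitely many noise values gives the bound #|W|/sqrt n. *)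

Lemma is_prob_le1 (R : realType) (S : finType) (p : S -> R) s : is_prob p -> p s <= 1.
Proof.
case=> p_ge0 p_sum1; rewrite -p_sum1 (bigD1 s) //= lerDl.
by apply: sumr_ge0 => s' _; exact: p_ge0.
Qed.

Section IidExpectation.
Variables (R : realType) (W : finType) (P : W -> R) (n : nat).
Hypothesis P_prob : is_prob P.

Local Notation E := (@iid_expect R W n P).

Lemma eq_iid_expect F G : F =1 G -> E F = E G.
Proof. by move=> FG; apply: eq_bigr => ws _; rewrite FG. Qed.

Lemma ler_iid_expect F G : (forall ws, F ws <= G ws) -> E F <= E G.
Proof.
move=> FG; apply: ler_sum => ws _; apply: ler_wpM2l => //.
by apply: prodr_ge0 => i _; exact: P_prob.1.
Qed.

Lemma iid_expectD F G : E (fun ws => F ws + G ws) = E F + E G.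
Proof. by rewrite /iid_expect -big_split; apply: eq_bigr => ws _; rewrite mulrDr. Qed.

Lemma iid_expectZ c F : E (fun ws => c * F ws) = c * E F.
Proof. by rewrite /iid_expect mulr_sumr; apply: eq_bigr => ws _; rewrite mulrCA. Qed.

Lemma iid_expect_sum (I : finType) (F : I -> ('I_n -> W) -> R) :
  E (fun ws => \sum_(i : I) F i ws) = \sum_(i : I) E (F i).
Proof. by rewrite /iid_expect; under eq_bigr do rewrite mulr_sumr; exact: exchange_big. Qed.

Lemma iid_expect_prod (F : 'I_n -> W -> R) :
  E (fun ws => \prod_(i < n) F i (ws i)) = \prod_(i < n) \sum_(v : W) P v * F i v.
Proof. by rewrite bigA_distr_bigA; apply: eq_bigr => ws _; rewrite big_split. Qed.

Lemma iid_expect_cst c : E (fun=> c) = c.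
Proof.
have total : \prod_(i < n) \sum_(v : W) P v * 1 = 1.
  by apply: big1 => i _; under eq_bigr do rewrite mulr1; exact: P_prob.2.
have := iid_expect_prod (fun _ _ => 1); rewrite total => one.
rewrite -[RHS]mulr1 -one -iid_expectZ.
by apply: eq_iid_expect => ws; rewrite big1 ?mulr1.
Qed.

Lemma iid_expect_indep (i j : 'I_n) (F G : W -> R) : i != j ->
  E (fun ws => F (ws i) * G (ws j)) =
  (\sum_(v : W) P v * F v) * (\sum_(v : W) P v * G v).
Proof.
move=> neq_ij.
pose H k v := if k == i then F v else if k == j then G v else 1.
rewrite (eq_iid_expect (G := fun ws => \prod_(k < n) H k (ws k))); last first.
  move=> ws; rewrite (bigD1 i) //= (bigD1 j) 1?eq_sym //= /H eqxx.
  rewrite [j == i]eq_sym (negPf neq_ij) eqxx big1 ?mulr1 //.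
  by move=> k /andP[/negPf -> /negPf ->].
rewrite iid_expect_prod (bigD1 i) //= (bigD1 j) 1?eq_sym //= /H eqxx.
rewrite [j == i]eq_sym (negPf neq_ij) eqxx [\prod_(_ < n | _) _]big1 ?mulr1 //.
move=> k /andP[/negPf -> /negPf ->].
by under eq_bigr do rewrite mulr1; exact: P_prob.2.
Qed.

Lemma iid_expect_norm_le F c :
  0 < c -> E (fun ws => F ws ^+ 2) <= c ^+ 2 -> E (fun ws => `|F ws|) <= c.
Proof.
move=> c_gt0 F2_le; rewrite -(ler_pM2l c_gt0) -iid_expectZ.
apply: le_trans (ler_iid_expect (G := fun ws => 2^-1 * (c ^+ 2 + F ws ^+ 2)) _) _.
  move=> ws; rewrite -(real_normK (num_real (F ws))) mulrC [2^-1 * _]mulrC addrC.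
  exact: leif_mean_square.
rewrite iid_expectZ iid_expectD iid_expect_cst; lra.
Qed.

Lemma iid_expect_mean_sq_le (Z : W -> R) :
    (0 < n)%N -> \sum_(v : W) P v * Z v = 0 -> (forall v, Z v ^+ 2 <= 1) ->
  E (fun ws => (n%:R^-1 * \sum_(i < n) Z (ws i)) ^+ 2) <= n%:R^-1.
Proof.
move=> n_gt0 Z_centred Z2_le1.
rewrite (eq_iid_expect (G :=
  fun ws => n%:R^-1 ^+ 2 * \sum_(i < n) \sum_(j < n) Z (ws i) * Z (ws j))); last first.
  by move=> ws; rewrite exprMn; congr (_ * _); rewrite expr2 big_distrlr.
rewrite iid_expectZ iid_expect_sum.
have row_le1 i : E (fun ws => \sum_(j < n) Z (ws i) * Z (ws j)) <= 1.
  rewrite iid_expect_sum (bigD1 i) //= big1 ?addr0 => [|j neq_ji]; last first.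
    by rewrite iid_expect_indep 1?eq_sym // Z_centred mul0r.
  by rewrite -(iid_expect_cst 1); apply: ler_iid_expect => ws; rewrite -expr2.
have sum_le : \sum_(i < n) E (fun ws => \sum_(j < n) Z (ws i) * Z (ws j)) <= n%:R.
  by rewrite -[n in n%:R]card_ord -sumr_const; apply: ler_sum => i _.
have inv2_ge0 : 0 <= n%:R^-1 ^+ 2 :> R by rewrite exprn_ge0 // invr_ge0 ler0n.
apply: le_trans (ler_wpM2l inv2_ge0 sum_le) _.
have n_neq0 : n%:R != 0 :> R by rewrite pnatr_eq0 -lt0n.
by rewrite expr2 -mulrA mulVf ?mulr1.
Qed.

End IidExpectation.

Definition empirical {R : realType} {W : finType} {n : nat} (ws : 'I_n -> W) (w : W) : R :=
  n%:R^-1 * \sum_(i < n) (ws i == w)%:R.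

Section EmpiricalLaw.
Variables (R : realType) (W : finType) (P : W -> R) (n : nat).
Hypothesis P_prob : is_prob P.

Lemma empirical_subE (ws : 'I_n -> W) w : (0 < n)%N ->
  empirical ws w - P w = n%:R^-1 * \sum_(i < n) ((ws i == w)%:R - P w).
Proof.
move=> n_gt0; have n_neq0 : n%:R != 0 :> R by rewrite pnatr_eq0 -lt0n.
by rewrite sumrB sumr_const card_ord mulrBr -[P w *+ n]mulr_natl mulKf.
Qed.

Lemma iid_expect_norm_empirical_sub_le w : (0 < n)%N ->
  iid_expect P (fun ws : 'I_n -> W => `|empirical ws w - P w|) <= (Num.sqrt n%:R)^-1.
Proof.
move=> n_gt0; apply: iid_expect_norm_le => //.
  by rewrite invr_gt0 sqrtr_gt0 ltr0n.
rewrite exprVn sqr_sqrtr ?ler0n //.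
rewrite (eq_iid_expect P (G :=
  fun ws => (n%:R^-1 * \sum_(i < n) ((ws i == w)%:R - P w)) ^+ 2)); last first.
  by move=> ws; rewrite empirical_subE.
apply: (iid_expect_mean_sq_le P_prob (Z := fun v => (v == w)%:R - P w)) => // [|v].
  under eq_bigr do rewrite mulrBr.
  rewrite sumrB -mulr_suml P_prob.2 mul1r (bigD1 w) //= eqxx mulr1 big1 ?addr0 ?subrr //.
  by move=> v /negPf ->; rewrite mulr0.
have := P_prob.1 w; have := is_prob_le1 w P_prob.
by case: (v == w) => /=; nra.
Qed.

End EmpiricalLaw.

Lemma supnorm_le (R : realType) (X : finType) (h : X -> R) c :
  0 <= c -> (forall y, `|h y| <= c) -> supnorm h <= c.
Proof. by move=> c_ge0 h_le; apply: bigmax_le. Qed.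

Section MeanFieldDeviation.
Variables (R : realType) (X U W : finType) (f : dyn R X U W) (P : W -> R).
Variables (n : nat) (m : X -> R) (g : X -> U) (ws : 'I_n -> W).

Lemma fbar_sub_fhat y :
  fbar f m g ws y - fhat f P m g y =
  \sum_(x : X) \sum_(w : W) (f x (g x) w m == y)%:R * m x * (empirical ws w - P w).
Proof.
rewrite /fbar /fhat /trans -sumrB; apply: eq_bigr => x _.
by rewrite mulr_sumr -sumrB; apply: eq_bigr => w _; rewrite /empirical; ring.
Qed.

Lemma norm_fbar_sub_fhat_le y : is_prob m ->
  `|fbar f m g ws y - fhat f P m g y| <= \sum_(w : W) `|empirical ws w - P w|.
Proof.
case=> m_ge0 m_sum1; rewrite fbar_sub_fhat.
apply: le_trans (ler_norm_sum _ _ _) _.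
apply: (@le_trans _ _ (\sum_(x : X) m x * \sum_(w : W) `|empirical ws w - P w|)).
  apply: ler_sum => x _.
  apply: le_trans (ler_norm_sum _ _ _) _; rewrite mulr_sumr; apply: ler_sum => w _.
  rewrite !normrM normr_nat (ger0_norm (m_ge0 x)).
  by case: (_ == _); rewrite ?mul1r ?mul0r // mulr_ge0.
by rewrite -mulr_suml m_sum1 mul1r.
Qed.

End MeanFieldDeviation.

Theorem lemma4 (R : realType) (T : nat) (X U W : finType)
    (f : 'I_T -> dyn R X U W) (pw : 'I_T -> W -> R)
    (hpw : forall t, is_prob (pw t)) :
  exists C : R, forall (n : nat), (0 < n)%N ->
    forall (t : 'I_T) (m : X -> R) (g : X -> U), in_Mn n m ->
      iid_expect (pw t)
        (fun ws : 'I_n -> W => supnorm (fun y => fbar (f t) m g ws y - fhat (f t) (pw t) m g y))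
      <= C / Num.sqrt (n%:R).
Proof.
exists #|W|%:R => n n_gt0 t m g [m_prob _].
apply: le_trans (ler_iid_expect (hpw t)
  (G := fun ws => \sum_(w : W) `|empirical ws w - pw t w|) _) _.
  move=> ws; apply: supnorm_le; last by move=> y; exact: norm_fbar_sub_fhat_le.
  by apply: sumr_ge0 => w _.
rewrite iid_expect_sum mulr_natl -sumr_const; apply: ler_sum => w _.
exact: iid_expect_norm_empirical_sub_le.
Qed.
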